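(* Let $0<\alpha<1$ and define, for real $\xi,\eta$ with $\eta\neq0$, $\xi-\eta\neq 0$, $\xi\ne 0$, $$m(\xi-\eta,\eta)=\frac{\xi(1+|\xi-\eta|^\alpha)(1+|\eta|^\alpha)}{2\left[\xi(1+|\eta|^\alpha)(|\xi-\eta|^\alpha-|\xi|^\alpha)-\eta(1+|\xi|^\alpha)(|\xi-\eta|^\alpha-|\eta|^\alpha)\right]}.$$ Then, with implicit constants depending only on $\alpha$, $$\frac{|\xi-\eta|}{|\eta|}+\frac{|\eta|}{|\xi-\eta|}\lesssim|m(\xi-\eta,\eta)|\lesssim\frac{|\xi-\eta|^{1-\alpha}}{|\eta|}+\frac{|\eta|^{1-\alpha}}{|\xi-\eta|}\quad \text{for } (\xi-\eta)^2+\eta^2\leq 1,$$ and $$\frac{|\xi-\eta|^{1-\alpha}}{|\eta|}+\frac{|\eta|^{1-\alpha}}{|\xi-\eta|}\lesssim|m(\xi-\eta,\eta)|\lesssim \frac{|\xi-\eta|}{|\eta|}+\frac{|\eta|}{|\xi-\eta|}\quad \text{for } (\xi-\eta)^2+\eta^2\geq 1.$$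
   Context: $f\lesssim g$ means $f\le Cg$ for a constant $C$ independent of the variables. The function $m$ is regarded as a function of the two variables $(\xi-\eta,\eta)$. *)

From Stdlib Require Import Reals.
Open Scope R_scope.

(* |x|^p for real p, used only for x <> 0. *)
Definition apow (x p : R) : R := Rpower (Rabs x) p.

(* The multiplier m(ξ-η, η), written as a function of (a, b) = (ξ-η, η),
   so ξ = a + b. Division is Stdlib's total Rdiv. *)
Definition m (al a b : R) : R :=
  let xi := a + b in
  (xi * (1 + apow a al) * (1 + apow b al)) /
  (2 * (xi * (1 + apow b al) * (apow a al - apow xi al)
        - b * (1 + apow xi al) * (apow a al - apow b al))).

From Stdlib Require Import Reals Lra.
Open Scope R_scope.

(* Up to swapping a and b and negating both, the triple (|a|, |b|, |a+b|) is (u, v, u+v),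
   (u+v, v, u) or (u+v, u, v) with 0 < u <= v, and in each case the denominator of m is
   -+2 den(u, v) for a single expression den, symmetric in u and v.  Concavity of t |-> t^al,
   in the form u^al <= ((u+v)/2)^al <= v^al and t y^al <= y t^al for t <= y, puts 2 den(u, v)
   between (1 - 2^-al) w and 4 w, where w = u (u+v)^al (1 + (u+v)^al).  Hence |m| is
   comparable to N / w, N the numerator of m, and in each of the three cases N / w is compared
   with the two ratio sums by elementary inequalities, separately for a^2 + b^2 <= 1 and >= 1. *)

Lemma Rpower_gt_0 x a : 0 < Rpower x a.
Proof. apply exp_pos. Qed.

Lemma Rpower_1_l a : Rpower 1 a = 1.
Proof. unfold Rpower. rewrite ln_1, Rmult_0_r. apply exp_0. Qed.

Lemma Rpower_le_1 x a : 0 <= a -> 0 < x <= 1 -> Rpower x a <= 1.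
Proof. intros. rewrite <- (Rpower_1_l a). now apply Rle_Rpower_l. Qed.

Lemma Rpower_lt_1 x a : 0 < a -> 0 < x < 1 -> Rpower x a < 1.
Proof. intros. rewrite <- (Rpower_1_l a). now apply Rlt_Rpower_l. Qed.

Lemma Rpower_ge_self x a : a <= 1 -> 0 < x <= 1 -> x <= Rpower x a.
Proof.
  intros Ha Hx.
  replace a with (1 - (1 - a)) by ring.
  unfold Rminus at 1. rewrite Rpower_plus, Rpower_1, Rpower_Ropp by lra.
  assert (0 < Rpower x (1 - a) <= 1)
    by (split; [apply Rpower_gt_0 | apply Rpower_le_1; lra]).
  rewrite <- (Rmult_1_r x) at 1. apply Rmult_le_compat_l; [lra|].
  rewrite <- Rinv_1 at 1. apply Rinv_le_contravar; lra.
Qed.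

Lemma Rpower_ratio_le x y a : 0 <= a <= 1 -> 0 < x <= y ->
  x * Rpower y a <= y * Rpower x a.
Proof.
  intros Ha Hxy.
  assert (Hy : 0 < y) by lra.
  assert (Ht : 0 < x / y <= 1).
  { split; [apply Rdiv_lt_0_compat; lra|].
    apply Rmult_le_reg_r with y; [lra|]. unfold Rdiv. rewrite Rmult_assoc, Rinv_l; lra. }
  replace x with (y * (x / y)) at 2 by (field; lra).
  rewrite <- Rpower_mult_distr by lra.
  pose proof (Rpower_ge_self (x / y) a (proj2 Ha) Ht). pose proof (Rpower_gt_0 y a).
  replace (x * Rpower y a) with (y * Rpower y a * (x / y)) by (field; lra).
  rewrite <- Rmult_assoc. apply Rmult_le_compat_l; nra.
Qed.

Lemma Rpower_1_minus x a : 0 < x -> Rpower x (1 - a) = x / Rpower x a.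
Proof. intros. unfold Rminus. now rewrite Rpower_plus, Rpower_1, Rpower_Ropp. Qed.

Lemma Rdiv_le_Rdiv_cross a b c d : 0 < b -> 0 < d -> a * d <= c * b -> a / b <= c / d.
Proof.
  intros Hb Hd H. apply Rmult_le_reg_r with (b * d); [nra|].
  replace (a / b * (b * d)) with (a * d) by (field; lra).
  replace (c / d * (b * d)) with (c * b) by (field; lra). exact H.
Qed.

Lemma apow_of_pos x a : 0 < x -> apow x a = Rpower x a.
Proof. intros. unfold apow. now rewrite Rabs_pos_eq by lra. Qed.

Lemma apow_opp x a : apow (- x) a = apow x a.
Proof. unfold apow. now rewrite Rabs_Ropp. Qed.

Definition den (al u v : R) : R :=
  u * (1 + Rpower v al) * (Rpower (u + v) al - Rpower u al)
  + v * (1 + Rpower u al) * (Rpower (u + v) al - Rpower v al).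

Lemma den_comm al u v : den al v u = den al u v.
Proof. unfold den. rewrite (Rplus_comm v u). ring. Qed.

Lemma m_comm al a b : m al b a = m al a b.
Proof. unfold m. rewrite (Rplus_comm b a). f_equal; ring. Qed.

Lemma m_opp al a b : m al (- a) (- b) = m al a b.
Proof.
  unfold m. replace (- a + - b) with (- (a + b)) by ring. rewrite !apow_opp.
  match goal with |- ?N' / ?D' = ?N / ?D =>
    replace N' with (- N) by ring; replace D' with (- D) by ring end.
  unfold Rdiv. rewrite Rinv_opp. ring.
Qed.

Lemma m_pos_pos al u v : 0 < u -> 0 < v ->
  m al u v = - ((u + v) * (1 + Rpower u al) * (1 + Rpower v al) / (2 * den al u v)).
Proof.
  intros. unfold m. cbv zeta. rewrite !apow_of_pos by lra.
  rewrite <- Rdiv_opp_r. f_equal. unfold den. ring.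
Qed.

Lemma m_sum_opp al u v : 0 < u -> 0 < v ->
  m al (u + v) (- v) = u * (1 + Rpower (u + v) al) * (1 + Rpower v al) / (2 * den al u v).
Proof.
  intros. unfold m. cbv zeta. replace (u + v + - v) with u by ring.
  rewrite apow_opp, !apow_of_pos by lra. f_equal. unfold den. ring.
Qed.

Definition ratio_sum (a b : R) : R := Rabs a / Rabs b + Rabs b / Rabs a.

Definition damped_ratio_sum (al a b : R) : R :=
  apow a (1 - al) / Rabs b + apow b (1 - al) / Rabs a.

Definition sandwich (C lo x hi : R) : Prop := lo <= C * x /\ x <= C * hi.

Definition m_estimates (al C a b : R) : Prop :=
  (a ^ 2 + b ^ 2 <= 1 ->
     sandwich C (ratio_sum a b) (Rabs (m al a b)) (damped_ratio_sum al a b)) /\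
  (1 <= a ^ 2 + b ^ 2 ->
     sandwich C (damped_ratio_sum al a b) (Rabs (m al a b)) (ratio_sum a b)).

Definition m_const (al : R) : R := 48 / (1 - Rpower (1 / 2) al).

Lemma ratio_sum_comm a b : ratio_sum b a = ratio_sum a b.
Proof. unfold ratio_sum. ring. Qed.

Lemma damped_ratio_sum_comm al a b : damped_ratio_sum al b a = damped_ratio_sum al a b.
Proof. unfold damped_ratio_sum. ring. Qed.

Lemma ratio_sum_opp_r a b : ratio_sum a (- b) = ratio_sum a b.
Proof. unfold ratio_sum. now rewrite Rabs_Ropp. Qed.

Lemma damped_ratio_sum_opp_r al a b : damped_ratio_sum al a (- b) = damped_ratio_sum al a b.
Proof. unfold damped_ratio_sum. now rewrite Rabs_Ropp, apow_opp. Qed.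

Lemma ratio_sum_of_pos a b : 0 < a -> 0 < b -> ratio_sum a b = (a * a + b * b) / (a * b).
Proof. intros. unfold ratio_sum. rewrite !Rabs_pos_eq by lra. field. lra. Qed.

Lemma damped_ratio_sum_of_pos al a b : 0 < a -> 0 < b ->
  damped_ratio_sum al a b =
  (a * a * Rpower b al + b * b * Rpower a al) / (Rpower a al * Rpower b al * a * b).
Proof.
  intros. unfold damped_ratio_sum.
  rewrite !apow_of_pos, !Rpower_1_minus, !Rabs_pos_eq by lra.
  pose proof (Rpower_gt_0 a al). pose proof (Rpower_gt_0 b al). field. lra.
Qed.

Lemma m_estimates_comm al C a b : m_estimates al C a b -> m_estimates al C b a.
Proof.
  unfold m_estimates. rewrite (m_comm al a b), (ratio_sum_comm a b),
    (damped_ratio_sum_comm al a b), (Rplus_comm (b ^ 2)).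
  auto.
Qed.

Lemma m_estimates_opp al C a b : m_estimates al C a b -> m_estimates al C (- a) (- b).
Proof.
  unfold m_estimates, ratio_sum, damped_ratio_sum.
  rewrite m_opp, !Rabs_Ropp, !apow_opp.
  replace ((- a) ^ 2 + (- b) ^ 2) with (a ^ 2 + b ^ 2) by ring.
  auto.
Qed.

Lemma sandwich_of_proxy K c lo x hi Q : 0 < c <= 1 -> 0 <= K -> 0 <= Q ->
  Q <= 4 * x -> c * x <= Q -> lo <= K * Q -> Q <= K * hi -> sandwich (4 * K / c) lo x hi.
Proof.
  intros Hc HK HQ Hx1 Hx2 Hlo Hhi. unfold sandwich.
  assert (Hx : 0 <= x) by lra.
  assert (1 <= / c) by (rewrite <- Rinv_1; apply Rinv_le_contravar; lra).
  unfold Rdiv. split.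
  - assert (4 * K * x <= 4 * K * / c * x) by (apply Rmult_le_compat_r; nra). nra.
  - apply Rmult_le_reg_l with c; [lra|].
    replace (c * (4 * K * / c * hi)) with (4 * K * hi) by (field; lra). nra.
Qed.

Section Ordered_pair.
Variables al u v : R.
Hypotheses (Hal : 0 < al < 1) (Hu : 0 < u) (Huv : u <= v).

Local Notation p := (Rpower u al).
Local Notation q := (Rpower v al).
Local Notation s := (Rpower (u + v) al).
Local Notation k := (Rpower (1 / 2) al).
Local Notation w := (u * s * (1 + s)).

Lemma half_pow_bounds : 1 / 2 <= k < 1.
Proof. split; [apply Rpower_ge_self | apply Rpower_lt_1]; lra. Qed.

Lemma pow_small_le : p <= k * s.
Proof. rewrite Rpower_mult_distr by lra. apply Rle_Rpower_l; lra. Qed.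

Lemma pow_large_ge : k * s <= q.
Proof. rewrite Rpower_mult_distr by lra. apply Rle_Rpower_l; lra. Qed.

Lemma pow_large_le : q <= s.
Proof. apply Rle_Rpower_l; lra. Qed.

Local Ltac pow_facts :=
  pose proof half_pow_bounds; pose proof pow_small_le;
  pose proof pow_large_ge; pose proof pow_large_le;
  pose proof (Rpower_gt_0 u al); pose proof (Rpower_gt_0 v al);
  pose proof (Rpower_gt_0 (u + v) al).

Lemma den_lower : (1 - k) * w <= 2 * den al u v.
Proof.
  pow_facts. unfold den.
  assert (0 <= v * (1 + p) * (s - q)) by (apply Rmult_le_pos; nra).
  assert (w <= u * s * (2 * (1 + q))) by (apply Rmult_le_compat_l; nra).
  assert (0 <= u * (1 + q) * (k * s - p)) by (apply Rmult_le_pos; nra).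
  nra.
Qed.

Lemma den_upper : 2 * den al u v <= 4 * w.
Proof.
  pow_facts.
  assert (p <= s) by lra.
  assert (Hconc : v * (s - q) <= u * s).
  { assert (v * s <= (u + v) * q) by (apply Rpower_ratio_le; lra). nra. }
  unfold den.
  assert (u * (1 + q) * (s - p) <= u * (1 + s) * s) by (apply Rmult_le_compat; nra).
  assert (v * (1 + p) * (s - q) <= (1 + s) * (u * s)).
  { replace (v * (1 + p) * (s - q)) with ((1 + p) * (v * (s - q))) by ring.
    apply Rmult_le_compat; nra. }
  nra.
Qed.

Lemma den_pos : 0 < den al u v.
Proof.
  pose proof den_lower. pow_facts.
  assert (0 < (1 - k) * w) by (repeat apply Rmult_lt_0_compat; lra). lra.
Qed.

Lemma m_estimates_of_proxy a b N : 0 <= N ->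
  Rabs (m al a b) = Rabs (N / (2 * den al u v)) ->
  (a ^ 2 + b ^ 2 <= 1 ->
     ratio_sum a b <= 12 * (N / w) /\ N / w <= 12 * damped_ratio_sum al a b) ->
  (1 <= a ^ 2 + b ^ 2 ->
     damped_ratio_sum al a b <= 12 * (N / w) /\ N / w <= 12 * ratio_sum a b) ->
  m_estimates al (m_const al) a b.
Proof.
  intros HN Hm Hsmall Hlarge.
  pose proof den_lower. pose proof den_upper. pose proof den_pos. pow_facts.
  assert (Hw : 0 < w) by (repeat apply Rmult_lt_0_compat; lra).
  rewrite (Rabs_pos_eq (N / _)) in Hm by (unfold Rdiv; apply Rle_mult_inv_pos; lra).
  assert (N / w <= 4 * Rabs (m al a b)).
  { rewrite Hm, Rmult_div_assoc. apply Rdiv_le_Rdiv_cross; nra. }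
  assert ((1 - k) * Rabs (m al a b) <= N / w).
  { rewrite Hm, Rmult_div_assoc. apply Rdiv_le_Rdiv_cross; nra. }
  assert (0 <= N / w) by (unfold Rdiv; apply Rle_mult_inv_pos; lra).
  unfold m_const. replace 48 with (4 * 12) by ring.
  split; intro Hr; [destruct (Hsmall Hr) | destruct (Hlarge Hr)];
    apply sandwich_of_proxy with (N / w); auto; lra.
Qed.

Lemma same_sign_small : u ^ 2 + v ^ 2 <= 1 ->
  ratio_sum u v <= 12 * ((u + v) * (1 + p) * (1 + q) / w) /\
  (u + v) * (1 + p) * (1 + q) / w <= 12 * damped_ratio_sum al u v.
Proof.
  intros Hr. pow_facts.
  assert (v <= 1) by nra. assert (q <= 1) by (apply Rpower_le_1; lra).
  assert (0 < w) by (repeat apply Rmult_lt_0_compat; lra).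
  assert (0 < p * q * u * v) by (repeat apply Rmult_lt_0_compat; lra).
  rewrite ratio_sum_of_pos, damped_ratio_sum_of_pos, !Rmult_div_assoc by lra.
  split; apply Rdiv_le_Rdiv_cross; try nra.
  - assert (u * u + v * v <= 2 * (v * v)) by nra.
    assert (s <= 2) by nra.
    assert (w <= u * 6) by (rewrite Rmult_assoc; apply Rmult_le_compat_l; nra).
    assert ((u * u + v * v) * w <= 2 * (v * v) * (u * 6)) by (apply Rmult_le_compat; nra).
    assert (1 <= (1 + p) * (1 + q)) by nra.
    assert (v <= (u + v) * (1 + p) * (1 + q)) by nra.
    assert (v * (u * v) <= (u + v) * (1 + p) * (1 + q) * (u * v))
      by (apply Rmult_le_compat_r; nra).
    lra.
  - assert ((1 + p) * (1 + q) <= 2 * (1 + s)) by nra.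
    assert ((u + v) * ((1 + p) * (1 + q)) <= 2 * v * (2 * (1 + s)))
      by (apply Rmult_le_compat; nra).
    assert ((u + v) * (1 + p) * (1 + q) * (p * q * u * v) <= 4 * v * (1 + s) * (p * q * u * v))
      by (apply Rmult_le_compat_r; nra).
    assert (v * v * p * (u * q * (1 + s)) <= v * v * p * w)
      by (apply Rmult_le_compat_l; nra).
    assert (0 <= u * u * q * w) by (repeat apply Rmult_le_pos; lra).
    assert (0 <= v * v * p * w) by (repeat apply Rmult_le_pos; lra).
    lra.
Qed.

Lemma same_sign_large : 1 <= u ^ 2 + v ^ 2 ->
  damped_ratio_sum al u v <= 12 * ((u + v) * (1 + p) * (1 + q) / w) /\
  (u + v) * (1 + p) * (1 + q) / w <= 12 * ratio_sum u v.
Proof.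
  intros Hr. pow_facts.
  assert (1 / 2 <= v) by nra. assert (k <= q) by (apply Rle_Rpower_l; lra).
  assert (0 < w) by (repeat apply Rmult_lt_0_compat; lra).
  assert (0 < p * q * u * v) by (repeat apply Rmult_lt_0_compat; lra).
  rewrite ratio_sum_of_pos, damped_ratio_sum_of_pos, !Rmult_div_assoc by lra.
  split; apply Rdiv_le_Rdiv_cross; try nra.
  - assert (u * q <= v * p) by (apply Rpower_ratio_le; lra).
    assert (u * (u * q) <= v * (v * p)) by (apply Rmult_le_compat; nra).
    assert (s <= 2 * q) by nra.
    assert (w <= u * (2 * q) * (2 * (1 + q))) by (apply Rmult_le_compat; nra).
    assert ((u * u * q + v * v * p) * w <= 2 * (v * v * p) * (u * (2 * q) * (2 * (1 + q))))
      by (apply Rmult_le_compat; nra).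
    assert (v * (1 + q) * (p * q * u * v) <= (u + v) * (1 + p) * (1 + q) * (p * q * u * v))
      by (apply Rmult_le_compat_r; nra).
    assert (0 <= v * (1 + q) * (p * q * u * v)) by (repeat apply Rmult_le_pos; lra).
    lra.
  - assert ((1 + p) * (1 + q) <= (1 + s) * (1 + s)) by (apply Rmult_le_compat; lra).
    assert ((1 + p) * (1 + q) <= 3 * s * (1 + s)) by nra.
    assert ((u + v) * ((1 + p) * (1 + q)) <= 2 * v * (3 * s * (1 + s)))
      by (apply Rmult_le_compat; nra).
    assert ((u + v) * (1 + p) * (1 + q) * (u * v) <= 2 * v * (3 * s * (1 + s)) * (u * v))
      by (apply Rmult_le_compat_r; nra).
    assert (0 <= u * u * w) by (repeat apply Rmult_le_pos; lra).
    assert (0 <= v * v * w) by (repeat apply Rmult_le_pos; lra).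
    lra.
Qed.

Lemma m_estimates_same_sign : m_estimates al (m_const al) u v.
Proof.
  pow_facts.
  apply (m_estimates_of_proxy _ _ ((u + v) * (1 + p) * (1 + q))).
  - repeat apply Rmult_le_pos; lra.
  - now rewrite m_pos_pos, Rabs_Ropp by lra.
  - exact same_sign_small.
  - exact same_sign_large.
Qed.

(* In the xi_min (resp. xi_mid) lemmas, xi = a + b is u (resp. v): |xi| is the smallest
   (resp. middle) one of |a|, |b|, |xi|. *)
Lemma xi_min_proxy : u * (1 + s) * (1 + q) / w = (1 + q) / s.
Proof. pow_facts. field. lra. Qed.

Lemma xi_min_small : (u + v) ^ 2 + (- v) ^ 2 <= 1 ->
  ratio_sum (u + v) (- v) <= 12 * ((1 + q) / s) /\
  (1 + q) / s <= 12 * damped_ratio_sum al (u + v) (- v).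
Proof.
  intros Hr. pow_facts.
  assert (u + v <= 1) by nra. assert (s <= 1) by (apply Rpower_le_1; lra).
  rewrite ratio_sum_opp_r, damped_ratio_sum_opp_r, ratio_sum_of_pos, damped_ratio_sum_of_pos,
    !Rmult_div_assoc by lra.
  assert (0 < s * q * (u + v) * v) by (repeat apply Rmult_lt_0_compat; lra).
  split; apply Rdiv_le_Rdiv_cross; try nra.
  - assert ((u + v) * (u + v) + v * v <= 3 * ((u + v) * v)) by nra.
    assert (((u + v) * (u + v) + v * v) * s <= 3 * ((u + v) * v)) by nra.
    assert (0 <= (u + v) * v) by (repeat apply Rmult_le_pos; lra).
    assert (0 <= q * ((u + v) * v)) by (repeat apply Rmult_le_pos; lra).
    lra.
  - assert ((1 + q) * (s * q * (u + v) * v) <= 2 * (s * q * (u + v) * (u + v)))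
      by (apply Rmult_le_compat; nra).
    assert (0 <= v * v * s * s) by (repeat apply Rmult_le_pos; lra).
    assert (0 <= (u + v) * (u + v) * q * s) by (repeat apply Rmult_le_pos; lra).
    lra.
Qed.

Lemma xi_min_large : 1 <= (u + v) ^ 2 + (- v) ^ 2 ->
  damped_ratio_sum al (u + v) (- v) <= 12 * ((1 + q) / s) /\
  (1 + q) / s <= 12 * ratio_sum (u + v) (- v).
Proof.
  intros Hr. pow_facts.
  assert (1 / 2 <= u + v) by nra. assert (k <= s) by (apply Rle_Rpower_l; lra).
  rewrite ratio_sum_opp_r, damped_ratio_sum_opp_r, ratio_sum_of_pos, damped_ratio_sum_of_pos,
    !Rmult_div_assoc by lra.
  assert (0 < s * q * (u + v) * v) by (repeat apply Rmult_lt_0_compat; lra).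
  split; apply Rdiv_le_Rdiv_cross; try nra.
  assert (s <= 2 * q) by nra.
  assert ((u + v) * ((u + v) * q * s) <= 2 * v * ((u + v) * q * s))
    by (apply Rmult_le_compat_r; nra).
  assert (v * s <= (u + v) * (2 * q)) by (apply Rmult_le_compat; nra).
  assert (v * s * (v * s) <= (u + v) * (2 * q) * (v * s)) by (apply Rmult_le_compat_r; nra).
  assert (0 <= q * (s * q * (u + v) * v)) by (repeat apply Rmult_le_pos; lra).
  lra.
Qed.

Lemma xi_mid_proxy : v * (1 + s) * (1 + p) / w = v * (1 + p) / (u * s).
Proof. pow_facts. field. lra. Qed.

Lemma xi_mid_small : (u + v) ^ 2 + (- u) ^ 2 <= 1 ->
  ratio_sum (u + v) (- u) <= 12 * (v * (1 + p) / (u * s)) /\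
  v * (1 + p) / (u * s) <= 12 * damped_ratio_sum al (u + v) (- u).
Proof.
  intros Hr. pow_facts.
  assert (u + v <= 1) by nra. assert (s <= 1) by (apply Rpower_le_1; lra).
  rewrite ratio_sum_opp_r, damped_ratio_sum_opp_r, ratio_sum_of_pos, damped_ratio_sum_of_pos,
    !Rmult_div_assoc by lra.
  assert (0 < s * p * (u + v) * u) by (repeat apply Rmult_lt_0_compat; lra).
  split; apply Rdiv_le_Rdiv_cross; try nra.
  - assert ((u + v) * (u + v) + u * u <= 4 * (v * (u + v))) by nra.
    assert (((u + v) * (u + v) + u * u) * (u * s) <= 4 * (v * (u + v)) * (u * 1))
      by (apply Rmult_le_compat; nra).
    assert (0 <= v * ((u + v) * u)) by (repeat apply Rmult_le_pos; lra).
    assert (0 <= p * (v * ((u + v) * u))) by (apply Rmult_le_pos; nra).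
    lra.
  - assert (v * (1 + p) <= 2 * (u + v)) by nra.
    assert (v * (1 + p) * (s * p * (u + v) * u) <= 2 * (u + v) * (s * p * (u + v) * u))
      by (apply Rmult_le_compat_r; nra).
    assert (0 <= u * u * s * (u * s)) by (repeat apply Rmult_le_pos; lra).
    assert (0 <= (u + v) * (u + v) * p * (u * s)) by (repeat apply Rmult_le_pos; lra).
    lra.
Qed.

Lemma xi_mid_large : 1 <= (u + v) ^ 2 + (- u) ^ 2 ->
  damped_ratio_sum al (u + v) (- u) <= 12 * (v * (1 + p) / (u * s)) /\
  v * (1 + p) / (u * s) <= 12 * ratio_sum (u + v) (- u).
Proof.
  intros Hr. pow_facts.
  assert (1 / 2 <= u + v) by nra. assert (k <= s) by (apply Rle_Rpower_l; lra).
  rewrite ratio_sum_opp_r, damped_ratio_sum_opp_r, ratio_sum_of_pos, damped_ratio_sum_of_pos,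
    !Rmult_div_assoc by lra.
  assert (0 < s * p * (u + v) * u) by (repeat apply Rmult_lt_0_compat; lra).
  split; apply Rdiv_le_Rdiv_cross; try nra.
  - assert (u * s <= (u + v) * p) by (apply Rpower_ratio_le; lra).
    assert (u * (u * s) <= (u + v) * ((u + v) * p)) by (apply Rmult_le_compat; nra).
    assert (((u + v) * (u + v) * p + u * u * s) * (u * s)
            <= 2 * (u + v) * ((u + v) * p * (u * s)))
      by (replace (2 * (u + v) * ((u + v) * p * (u * s)))
            with (2 * ((u + v) * (u + v) * p) * (u * s)) by ring;
          apply Rmult_le_compat_r; nra).
    assert (2 * (u + v) * ((u + v) * p * (u * s)) <= 4 * v * ((u + v) * p * (u * s)))
      by (apply Rmult_le_compat_r; nra).
    assert (0 <= v * (s * p * (u + v) * u)) by (repeat apply Rmult_le_pos; lra).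
    assert (0 <= p * (s * p * (u + v) * u) * v) by (repeat apply Rmult_le_pos; lra).
    lra.
  - assert (v * (1 + p) <= (u + v) * (3 * s)) by (apply Rmult_le_compat; nra).
    assert (v * (1 + p) * ((u + v) * u) <= (u + v) * (3 * s) * ((u + v) * u))
      by (apply Rmult_le_compat_r; nra).
    assert (0 <= u * u * (u * s)) by (repeat apply Rmult_le_pos; lra).
    assert (0 <= (u + v) * (u + v) * (u * s)) by (repeat apply Rmult_le_pos; lra).
    lra.
Qed.

Lemma m_estimates_xi_min : m_estimates al (m_const al) (u + v) (- v).
Proof.
  pow_facts.
  apply (m_estimates_of_proxy _ _ (u * (1 + s) * (1 + q))); rewrite ?xi_min_proxy.
  - repeat apply Rmult_le_pos; lra.
  - now rewrite m_sum_opp by lra.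
  - exact xi_min_small.
  - exact xi_min_large.
Qed.

Lemma m_estimates_xi_mid : m_estimates al (m_const al) (u + v) (- u).
Proof.
  pow_facts.
  apply (m_estimates_of_proxy _ _ (v * (1 + s) * (1 + p))); rewrite ?xi_mid_proxy.
  - repeat apply Rmult_le_pos; lra.
  - now rewrite (Rplus_comm u v), m_sum_opp, den_comm by lra.
  - exact xi_mid_small.
  - exact xi_mid_large.
Qed.

End Ordered_pair.

Lemma m_estimates_opposite_signs al a b : 0 < al < 1 -> 0 < a -> b < 0 -> 0 < a + b ->
  m_estimates al (m_const al) a b.
Proof.
  intros Hal Ha Hb Hab.
  rewrite <- (Ropp_involutive b).
  destruct (Rle_or_lt (a + b) (- b)).
  - replace a with (a + b + - b) at 1 by ring.
    now apply m_estimates_xi_min; [| lra |].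
  - replace a with (- b + (a + b)) at 1 by ring.
    now apply m_estimates_xi_mid; lra.
Qed.

Lemma m_estimates_pos_sum al a b : 0 < al < 1 -> a <> 0 -> b <> 0 -> 0 < a + b ->
  m_estimates al (m_const al) a b.
Proof.
  intros Hal Ha Hb Hab.
  destruct (Rlt_or_le 0 a), (Rlt_or_le 0 b).
  - destruct (Rle_or_lt a b).
    + now apply m_estimates_same_sign.
    + apply m_estimates_comm, m_estimates_same_sign; lra.
  - apply m_estimates_opposite_signs; lra.
  - apply m_estimates_comm, m_estimates_opposite_signs; lra.
  - lra.
Qed.

Theorem proposition2p1 (al : R) (Hal0 : 0 < al) (Hal1 : al < 1) :
  exists C : R, 0 < C /\
  forall a b : R, a <> 0 -> b <> 0 -> a + b <> 0 ->
    (a ^ 2 + b ^ 2 <= 1 ->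
       Rabs a / Rabs b + Rabs b / Rabs a <= C * Rabs (m al a b) /\
       Rabs (m al a b) <= C * (apow a (1 - al) / Rabs b + apow b (1 - al) / Rabs a)) /\
    (1 <= a ^ 2 + b ^ 2 ->
       apow a (1 - al) / Rabs b + apow b (1 - al) / Rabs a <= C * Rabs (m al a b) /\
       Rabs (m al a b) <= C * (Rabs a / Rabs b + Rabs b / Rabs a)).
Proof.
  assert (Hal : 0 < al < 1) by lra.
  exists (m_const al). split.
  - pose proof (half_pow_bounds al Hal). apply Rdiv_lt_0_compat; lra.
  - intros a b Ha Hb Hab.
    destruct (Rlt_or_le 0 (a + b)) as [Hpos | Hneg].
    + exact (m_estimates_pos_sum al a b Hal Ha Hb Hpos).
    + pose proof (m_estimates_pos_sum al (- a) (- b) Hal ltac:(lra) ltac:(lra) ltac:(lra)).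
      rewrite <- (Ropp_involutive a), <- (Ropp_involutive b).
      now apply m_estimates_opp.
Qed.
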